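(* Let $l\ge2$ be odd and let $a,b\in\{1,\dots,l-1\}$ be such that $X=X(\mathbb{Z}_{2l},\{\pm a,\pm b\})$ is a connected $4$-regular circulant graph with $a+b\ne l$. Then $X$ does not admit perfect state transfer between (distinct) vertex type states.
   Context: $X(\mathbb{Z}_n,S)$ (with $S\subseteq\mathbb{Z}_n\setminus\{0\}$, $S=-S$) has vertex set $\mathbb{Z}_n$ and edges $\{x,y\}$ with $y-x\in S$. For a graph with symmetric arc set $\mathcal{A}$ ($t((x,y))=y$, $(x,y)^{-1}=(y,x)$): boundary matrix $d_{x,a}=\frac{1}{\sqrt{\deg x}}\delta_{x,t(a)}$, shift matrix $R_{a,b}=\delta_{a,b^{-1}}$, $U=R(2d^*d-I_{\mathcal{A}})$. Perfect state transfer between vertex type states means $U^\tau d^*e_x=\gamma d^*e_y$ for some distinct vertices $x,y$, some $\tau\in\mathbb{Z}_{\ge1}$ and some $|\gamma|=1$ ($e_x$ the standard unit vector). *)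

From mathcomp Require Import all_boot all_order all_algebra all_field.
Set Implicit Arguments. Unset Strict Implicit. Unset Printing Implicit Defensive.
Import Order.TTheory GRing.Theory Num.Theory.
Local Open Scope ring_scope.

Section QWalk.
Variables (T : finType) (e : rel T).

Definition arc := {p : T * T | e p.1 p.2}.

Definition head_of (a : arc) : T := (val a).2.
Definition tail_of (a : arc) : T := (val a).1.

Definition deg (x : T) : nat := #|[set y | e x y]|.

Definition bdry (x : T) (a : arc) : algC :=
  if x == head_of a then (sqrtC (deg x)%:R)^-1 else 0.

Definition shift (a b : arc) : algC :=
  if (val a == (head_of b, tail_of b)) then 1 else 0.

Definition dstar_d (a b : arc) : algC := \sum_(x : T) (bdry x a)^* * bdry x b.

Definition Umat (a b : arc) : algC :=
  \sum_(c : arc) shift a c * (2 * dstar_d c b - (c == b)%:R).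

Definition Uapply (v : arc -> algC) : arc -> algC :=
  fun a => \sum_(b : arc) Umat a b * v b.
Definition Upow (n : nat) (v : arc -> algC) : arc -> algC := iter n Uapply v.

Definition vstate (x : T) : arc -> algC := fun a => (bdry x a)^*.

Definition PST_vertex : Prop :=
  exists x y : T, x != y /\
  exists tau : nat, (1 <= tau)%N /\
  exists gamma : algC, `|gamma| = 1 /\
    forall a : arc, Upow tau (vstate x) a = gamma * vstate y a.

End QWalk.

Definition circ_rel (n : nat) (S : {set 'Z_n}) : rel 'Z_n :=
  fun x y => (y - x) \in S.

Definition graph_connected (T : finType) (e : rel T) : Prop :=
  forall x y : T, connect e x y.

Definition regular (T : finType) (e : rel T) (k : nat) : Prop :=
  forall x : T, deg e x = k.

From Pilot Require Import Defs.
From mathcomp Require Import all_boot all_order all_algebra all_field.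
From mathcomp Require Import ring zify.
Set Implicit Arguments. Unset Strict Implicit. Unset Printing Implicit Defensive.
Import Order.TTheory GRing.Theory Num.Theory.
Local Open Scope ring_scope.

(* Pairing a state of the walk with chi o head and chi o tail, for an adjacency
   eigenvector chi with eigenvalue sigma of a d-regular graph, gives a
   two-dimensional quotient on which U acts by V_t -> (2 sigma / d) V_t - V_(t-1).
   Starting from the vertex state of x, the head pairing after t steps is
   (sqrt d / 2) V_t(2 sigma / d) chi(x), V_t the Vieta-Lucas polynomials. So
   perfect state transfer from x to y with phase gamma forces
   V_tau(2 sigma / d) chi(x) = 2 gamma chi(y), and the constant eigenvector
   gives gamma = 1. On the circulant graph, chi(z) = eta^z with eta a primitive
   l-th root of unity has eigenvalue sigma = u + 1/u + v + 1/v, u = eta^a,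
   v = eta^b; since V_tau is monic with integer coefficients and chi takes
   root-of-unity values, sigma / 2 is an algebraic integer. But
   v sigma = (1 + v/u)(1 + u v), and 1 + theta is a unit of the algebraic
   integers for every root of unity theta != 1 of odd order, so sigma / 2 is
   1/2 times a unit: a contradiction. *)

Section VietaLucas.
Context {R : comNzRingType}.

(* [vieta_lucas_pair t] is (V_t, V_(t-1)) for the Vieta-Lucas polynomials
   V_0 = 2, V_1 = X, V_(t+1) = X V_t - V_(t-1); V_(-1) = X. *)
Fixpoint vieta_lucas_pair (t : nat) : {poly R} * {poly R} :=
  if t is t'.+1 then
    let p := vieta_lucas_pair t' in ('X * p.1 - p.2, p.1)
  else (2, 'X).

Definition vieta_lucas t := (vieta_lucas_pair t).1.
Definition vieta_lucas_prev t := (vieta_lucas_pair t).2.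

Lemma vieta_lucas0 : vieta_lucas 0 = 2.
Proof. by []. Qed.

Lemma vieta_lucas_prev0 : vieta_lucas_prev 0 = 'X.
Proof. by []. Qed.

Lemma vieta_lucasS t :
  vieta_lucas t.+1 = 'X * vieta_lucas t - vieta_lucas_prev t.
Proof. by []. Qed.

Lemma vieta_lucas_prevS t : vieta_lucas_prev t.+1 = vieta_lucas t.
Proof. by []. Qed.

Lemma vieta_lucas_at2 t :
  (vieta_lucas t).[2] = 2 /\ (vieta_lucas_prev t).[2] = 2.
Proof.
elim: t => [|t [IHv IHp]]; first by rewrite /vieta_lucas /vieta_lucas_prev /= !hornerE.
by rewrite vieta_lucasS vieta_lucas_prevS !hornerE IHv IHp; split=> //; ring.
Qed.

Lemma vieta_lucas_monic_size t : (0 < t)%N ->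
  [/\ vieta_lucas t \is monic, size (vieta_lucas t) = t.+1
    & (size (vieta_lucas_prev t) <= t)%N].
Proof.
elim: t => [//|[_ _|t IH _]].
  have -> : vieta_lucas 1 = 'X by rewrite vieta_lucasS mulr_natr mulr2n addrK.
  by rewrite monicX size_polyX vieta_lucas_prevS /vieta_lucas /= -polyC_natr size_polyC_leq1.
have [mon sz szp] := IH isT.
have szX : size ('X * vieta_lucas t.+1) = t.+3.
  by rewrite mulrC size_mulX ?monic_neq0 // sz.
have lt_prev : (size (- vieta_lucas_prev t.+1) < size ('X * vieta_lucas t.+1)%R)%N.
  by rewrite size_polyN szX ltnS (leq_trans szp).
rewrite vieta_lucasS vieta_lucas_prevS monicE lead_coefDl // size_polyDl //.
by rewrite szX -monicE monicMl ?monicX // vieta_lucas_prevS sz.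
Qed.

End VietaLucas.

Lemma vieta_lucas_int (R : archiNumDomainType) t :
  vieta_lucas t \is a polyOver (Num.int : {pred R}).
Proof.
(* The subring structure of [Num.int] is found only through [int_num_subdef]. *)
change (vieta_lucas t \is a polyOver (@Num.int_num_subdef R)).
suff : (vieta_lucas t \is a polyOver (@Num.int_num_subdef R))
    && (vieta_lucas_prev t \is a polyOver (@Num.int_num_subdef R)) by case/andP.
elim: t => [|t /andP[IHv IHp]]; first by rewrite rpred_nat polyOverX.
by rewrite vieta_lucasS vieta_lucas_prevS IHv andbT rpredB ?rpredM ?polyOverX.
Qed.

Lemma horner_monic_Aint (p : {poly algC}) x :
  p.[x] \in Aint -> p \is monic -> (1 < size p)%N -> p \is a polyOver Num.int ->
  x \in Aint.
Proof.
move=> px_Aint p_monic p_gt1 p_int.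
apply: (@root_monic_Aint (minCpoly p.[x] \Po p)).
- by rewrite /root horner_comp; exact: root_minCpoly.
- by rewrite monicE lead_coef_comp // (monicP p_monic) expr1n mulr1 -monicE minCpoly_monic.
- exact: polyOver_comp.
Qed.

Lemma half_notin_Aint : (2 : algC)^-1 \notin Aint.
Proof.
have half_rat : (2 : algC)^-1 \in Crat by rewrite rpredV rpred_nat.
apply/negP => /(Cint_rat_Aint half_rat)/norm_intr_ge1.
rewrite invr_eq0 pnatr_eq0 ger0_norm ?invr_ge0 ?ler0n // invf_ge1 ?ltr0n //.
by move=> /(_ isT); rewrite lern1.
Qed.

Lemma unity_root_add1_Aint_unit l (th : algC) :
  odd l -> th ^+ l = 1 -> th != 1 -> exists2 w, w \in Aint & (1 + th) * w = 1.
Proof.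
move=> l_odd th_l th_ne1.
have th_Aint : th \in Aint.
  by apply: (Aint_unity_root (odd_gt0 l_odd)); rewrite unity_rootE th_l.
exists (\sum_(i < (l./2).+1) (th ^+ 2) ^+ i).
  by apply: rpred_sum => i _; rewrite !rpredX.
(* As th = (th^2)^((l+1)/2), we get th - 1 = (th^2 - 1) * sum_i th^(2i). *)
have th_2k : (th ^+ 2) ^+ (l./2).+1 = th.
  rewrite -exprM (_ : (2 * _)%N = l.+1) ?exprS ?th_l ?mulr1 //.
  by rewrite -{2}(odd_double_half l) l_odd -muln2; lia.
apply: (mulfI (_ : th - 1 != 0)); first by rewrite subr_eq0.
by rewrite mulr1 mulrA [1 + th]addrC -subr_sqr_1 -subrX1 th_2k.
Qed.

Lemma half_sum_unity_roots_notin_Aint l (u v : algC) :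
  odd l -> u ^+ l = 1 -> v ^+ l = 1 -> u != v -> u * v != 1 ->
  (u + u^-1 + v + v^-1) / 2 \notin Aint.
Proof.
move=> l_odd u_l v_l u_ne_v uv_ne1.
have unity_neq0 (w : algC) : w ^+ l = 1 -> w != 0.
  move=> w_l; apply/eqP => w0; move: w_l.
  by rewrite w0 expr0n gtn_eqF ?odd_gt0 //= => /eqP; rewrite eq_sym oner_eq0.
have [u_neq0 v_neq0] := (unity_neq0 u u_l, unity_neq0 v v_l).
have [w1 w1_Aint w1E] : exists2 w, w \in Aint & (1 + v / u) * w = 1.
  apply: (unity_root_add1_Aint_unit l_odd).
    by rewrite exprMn exprVn u_l v_l invr1 mulr1.
  by apply: contraNneq u_ne_v => /divr1_eq ->.
have [w2 w2_Aint w2E] : exists2 w, w \in Aint & (1 + u * v) * w = 1.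
  by apply: (unity_root_add1_Aint_unit l_odd) => //; rewrite exprMn u_l v_l mulr1.
apply/negP => half_sum_Aint.
(* [v (u + u^-1 + v + v^-1) = (1 + v / u) (1 + u v)] makes half the sum 1/2 times a unit. *)
have halfE : v * ((u + u^-1 + v + v^-1) / 2) * w1 * w2 = 2^-1.
  transitivity ((1 + v / u) * w1 * ((1 + u * v) * w2) / 2).
    by field; rewrite u_neq0 v_neq0.
  by rewrite w1E w2E !mul1r.
have v_Aint : v \in Aint.
  by apply: (Aint_unity_root (odd_gt0 l_odd)); rewrite unity_rootE v_l.
apply: (negP half_notin_Aint); rewrite -halfE.
by do 3!apply: rpredM => //.
Qed.

Lemma half_sum_prim_root_notin_Aint l (eta : algC) a b :
  odd l -> l.-primitive_root eta -> (0 < a < l)%N -> (0 < b < l)%N -> a != b ->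
  (a + b != l)%N -> (eta ^+ a + eta ^- a + eta ^+ b + eta ^- b) / 2 \notin Aint.
Proof.
move=> l_odd eta_prim a_range b_range a_ne_b ab_ne_l.
have root_l k : (eta ^+ k) ^+ l = 1 by rewrite exprAC (prim_expr_order eta_prim) expr1n.
apply: half_sum_unity_roots_notin_Aint l_odd (root_l a) (root_l b) _ _.
  by rewrite (eq_prim_root_expr eta_prim) !modn_small //; lia.
rewrite -exprD -(prim_order_dvd eta_prim); apply/negP => /dvdnP[k ab_kl].
by case: k ab_kl => [|[|k]]; rewrite ?mulSn; lia.
Qed.

Definition adj_eigen (T : finType) (e : rel T) (chi : T -> algC) (sigma : algC) :=
  forall x, \sum_(y | e x y) chi y = sigma * chi x.

Section RegularGraphWalk.
Variables (T : finType) (e : rel T) (d : nat).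
Hypotheses (e_sym : symmetric e) (e_reg : regular e d) (d_gt0 : (0 < d)%N).

Local Notation arc := (Defs.arc e).
Local Notation sqrtd := (sqrtC d%:R : algC).

Lemma arc_rev_subproof (a : arc) : e (val a).2 (val a).1.
Proof. by rewrite e_sym; exact: valP a. Qed.

Definition arc_rev (a : arc) : arc := exist _ ((val a).2, (val a).1) (arc_rev_subproof a).

Lemma arc_revK : involutive arc_rev.
Proof. by move=> a; apply: val_inj; case: a => [[]]. Qed.

Lemma sum_arc_rev (F : arc -> algC) : \sum_a F (arc_rev a) = \sum_a F a.
Proof. by rewrite [RHS](reindex_inj (inv_inj arc_revK)). Qed.

Lemma sum_arc_val (F : T * T -> algC) :
  \sum_(a : arc) F (val a) = \sum_(p | e p.1 p.2) F p.
Proof.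
rewrite (reindex_omap (val : arc -> T * T) insub) => [|p p_arc]; last first.
  by rewrite insubT.
by apply: eq_bigl => -[p p_arc] /=; rewrite insubT p_arc /= eqxx.
Qed.

Lemma sum_arc_tail (f : T -> algC) x :
  \sum_(a : arc) (tail_of a == x)%:R * f (head_of a) = \sum_(y | e x y) f y.
Proof.
rewrite (sum_arc_val (fun p => (p.1 == x)%:R * f p.2)).
rewrite -(pair_big_dep xpredT e (fun u y => (u == x)%:R * f y)) /=.
rewrite (bigD1 x) //= [X in _ + X]big1 ?addr0 => [|u /negbTE u_ne_x].
  by apply: eq_bigr => y _; rewrite eqxx mul1r.
by apply: big1 => y _; rewrite u_ne_x mul0r.
Qed.

Lemma sum_arc_head (f : T -> algC) x :
  \sum_(a : arc) (head_of a == x)%:R * f (tail_of a) = \sum_(y | e x y) f y.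
Proof.
by rewrite -(sum_arc_rev (fun a => (head_of a == x)%:R * f (tail_of a))) sum_arc_tail.
Qed.

Lemma sum_adj_cst x (c : algC) : \sum_(y | e x y) c = d%:R * c.
Proof. by rewrite sumr_const -(e_reg x) /deg cardsE mulr_natl. Qed.

Lemma natd_neq0 : d%:R != 0 :> algC.
Proof. by rewrite pnatr_eq0 -lt0n. Qed.

Lemma sqrtd_neq0 : sqrtd != 0.
Proof. by rewrite sqrtC_eq0 pnatr_eq0 -lt0n. Qed.

Lemma bdryE x (a : arc) : bdry x a = sqrtd^-1 * (x == head_of a)%:R.
Proof. by rewrite /bdry e_reg; case: eqP; rewrite ?mulr1 ?mulr0. Qed.

Lemma conj_inv_sqrtd : (sqrtd^-1)^* = sqrtd^-1.
Proof. by rewrite fmorphV /= geC0_conj ?sqrtC_ge0 ?ler0n. Qed.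

Lemma vstateE x (a : arc) : vstate x a = sqrtd^-1 * (x == head_of a)%:R.
Proof. by rewrite /vstate bdryE rmorphM /= conj_inv_sqrtd conjC_nat. Qed.

Lemma dstar_dE (a b : arc) : dstar_d a b = d%:R^-1 * (head_of a == head_of b)%:R.
Proof.
rewrite /dstar_d (bigD1 (head_of a)) //= big1 ?addr0 => [|x /negbTE x_ne]; last first.
  by rewrite !bdryE x_ne mulr0 rmorph0 mul0r.
by rewrite !bdryE eqxx mulr1 conj_inv_sqrtd mulrA -expr2 exprVn sqrtCK.
Qed.

Lemma shiftE (a b : arc) : shift a b = (b == arc_rev a)%:R.
Proof.
rewrite /shift /head_of /tail_of; case: a b => [[x y] ?] [[u v] ?] /=.
rewrite -[X in nat_of_bool X]val_eqE /= !xpair_eqE [u == y]eq_sym [v == x]eq_sym.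
by rewrite andbC; case: (_ && _).
Qed.

Lemma UmatE (a b : arc) :
  Umat a b = 2 / d%:R * (tail_of a == head_of b)%:R - (arc_rev a == b)%:R.
Proof.
rewrite /Umat (bigD1 (arc_rev a)) //= big1 ?addr0 => [|c /negbTE c_ne]; last first.
  by rewrite shiftE c_ne mul0r.
by rewrite shiftE eqxx mul1r dstar_dE mulrA.
Qed.

Lemma UapplyE (psi : arc -> algC) a :
  Uapply psi a =
  2 / d%:R * \sum_b (tail_of a == head_of b)%:R * psi b - psi (arc_rev a).
Proof.
rewrite /Uapply; under eq_bigr do rewrite UmatE mulrBl.
rewrite sumrB mulr_sumr; congr (_ - _); first by apply: eq_bigr => b _; rewrite mulrA.
rewrite (bigD1 (arc_rev a)) //= big1 ?addr0 ?eqxx ?mul1r // => b /negbTE b_ne.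
by rewrite eq_sym b_ne mul0r.
Qed.

Lemma UpowS t (psi : arc -> algC) : Upow t.+1 psi = Uapply (Upow t psi).
Proof. by []. Qed.

Section Eigenvector.
Variables (chi : T -> algC) (sigma : algC).
Hypothesis chi_eigen : adj_eigen e chi sigma.

Definition head_pairing (psi : arc -> algC) := \sum_a psi a * chi (head_of a).
Definition tail_pairing (psi : arc -> algC) := \sum_a psi a * chi (tail_of a).

Lemma sum_Uapply_mul (psi K : arc -> algC) :
  \sum_a Uapply psi a * K a =
  2 / d%:R * \sum_b psi b * (\sum_a (tail_of a == head_of b)%:R * K a)
  - \sum_a psi a * K (arc_rev a).
Proof.
set c := 2 / d%:R.
under eq_bigr do rewrite UapplyE -/c mulrBl -mulrA mulr_suml.
rewrite sumrB -mulr_sumr exchange_big /= -[X in _ - X]sum_arc_rev.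
congr (_ * _ - _); last by apply: eq_bigr => a _; rewrite arc_revK.
apply: eq_bigr => b _; rewrite mulr_sumr; apply: eq_bigr => a _.
by rewrite mulrCA mulrA.
Qed.

Lemma tail_pairing_Uapply psi : tail_pairing (Uapply psi) = head_pairing psi.
Proof.
have inner (b : arc) :
    \sum_(a : arc) (tail_of a == head_of b)%:R * chi (tail_of a) = d%:R * chi (head_of b).
  rewrite -(sum_adj_cst (head_of b)) -(sum_arc_tail (fun=> chi (head_of b))).
  by apply: eq_bigr => a _; case: eqP => [->|]; rewrite ?mul0r.
rewrite /tail_pairing sum_Uapply_mul; under eq_bigr do rewrite inner mulrCA.
by rewrite -mulr_sumr -/(head_pairing psi); field; exact: natd_neq0.
Qed.

Lemma head_pairing_Uapply psi :
  head_pairing (Uapply psi) = 2 * sigma / d%:R * head_pairing psi - tail_pairing psi.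
Proof.
have inner (b : arc) :
    \sum_(a : arc) (tail_of a == head_of b)%:R * chi (head_of a) = sigma * chi (head_of b).
  by rewrite sum_arc_tail chi_eigen.
rewrite /head_pairing sum_Uapply_mul; under eq_bigr do rewrite inner mulrCA.
by rewrite -mulr_sumr -/(head_pairing psi) -/(tail_pairing psi) mulrA [2 / _ * _]mulrAC.
Qed.

Lemma head_pairing_vstate x : head_pairing (vstate x) = sqrtd * chi x.
Proof.
transitivity (\sum_(a : arc) (head_of a == x)%:R * (sqrtd^-1 * chi x)).
  apply: eq_bigr => a _; rewrite vstateE eq_sym.
  by case: eqP => [->|]; rewrite ?mulr0 ?mul0r ?mulr1 ?mul1r.
rewrite (sum_arc_head (fun=> sqrtd^-1 * chi x)) sum_adj_cst.
by rewrite -{1}(sqrtCK d%:R) mulrA expr2 mulfK ?sqrtd_neq0.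
Qed.

Lemma tail_pairing_vstate x : tail_pairing (vstate x) = sqrtd^-1 * sigma * chi x.
Proof.
rewrite -mulrA -chi_eigen -sum_arc_head mulr_sumr.
by apply: eq_bigr => a _; rewrite vstateE eq_sym mulrA.
Qed.

Lemma pairings_Upow_vstate x t :
  head_pairing (Upow t (vstate x))
    = sqrtd / 2 * (vieta_lucas t).[2 * sigma / d%:R] * chi x /\
  tail_pairing (Upow t (vstate x))
    = sqrtd / 2 * (vieta_lucas_prev t).[2 * sigma / d%:R] * chi x.
Proof.
elim: t => [|t [IHh IHt]].
  rewrite head_pairing_vstate tail_pairing_vstate vieta_lucas0 vieta_lucas_prev0.
  rewrite hornerX -polyC_natr hornerC; set s := sqrtd; rewrite -(sqrtCK d%:R) -/s.
  by split; field; rewrite ?sqrtd_neq0.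
rewrite UpowS head_pairing_Uapply tail_pairing_Uapply IHh IHt.
by rewrite vieta_lucasS vieta_lucas_prevS hornerD hornerN hornerM hornerX; split=> //; ring.
Qed.

End Eigenvector.

Lemma transfer_eigen x y tau gamma :
    (forall a : arc, Upow tau (vstate x) a = gamma * vstate y a) ->
  forall chi sigma, adj_eigen e chi sigma ->
  (vieta_lucas tau).[2 * sigma / d%:R] * chi x = 2 * gamma * chi y.
Proof.
move=> transfer chi sigma chi_eigen.
have [head_tau _] := pairings_Upow_vstate chi_eigen x tau.
have : head_pairing chi (Upow tau (vstate x)) = gamma * (sqrtd * chi y).
  rewrite -head_pairing_vstate /head_pairing mulr_sumr.
  by apply: eq_bigr => a _; rewrite transfer mulrA.
rewrite head_tau => headE.
apply: (mulfI (_ : sqrtd / 2 != 0)); first by rewrite mulf_neq0 ?invr_eq0 ?pnatr_eq0 ?sqrtd_neq0.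
by rewrite mulrA headE; field.
Qed.

Lemma PST_vertex_lucas : PST_vertex e -> exists x y tau, (0 < tau)%N /\
  forall chi sigma, adj_eigen e chi sigma ->
  (vieta_lucas tau).[2 * sigma / d%:R] * chi x = 2 * chi y.
Proof.
case=> x [y [_ [tau [tau_gt0 [gamma [_ transfer]]]]]].
have gamma1 : gamma = 1.
  have cst_eigen : adj_eigen e (fun=> 1) d%:R by move=> v; rewrite sum_adj_cst.
  have := transfer_eigen transfer cst_eigen.
  rewrite mulfK ?natd_neq0 // (vieta_lucas_at2 tau).1 !mulr1 => two_gamma.
  by rewrite -(mulKf (_ : 2 != 0) gamma) ?pnatr_eq0 // -two_gamma mulVf ?pnatr_eq0.
exists x, y, tau; split=> // chi sigma chi_eigen.
by rewrite (transfer_eigen transfer chi_eigen) gamma1 mulr1.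
Qed.


Lemma PST_vertex_eigen_Aint l chi sigma :
  PST_vertex e -> (0 < l)%N -> (forall x, chi x ^+ l = 1) -> adj_eigen e chi sigma ->
  2 * sigma / d%:R \in Aint.
Proof.
move=> pst l_gt0 chi_l chi_eigen.
have [x [y [tau [tau_gt0 lucasE]]]] := PST_vertex_lucas pst.
have [lucas_monic lucas_size _] := vieta_lucas_monic_size (R := algC) tau_gt0.
have chi_Aint v : chi v \in Aint.
  by apply: (Aint_unity_root l_gt0); rewrite unity_rootE chi_l.
have lucas_Aint : (vieta_lucas tau).[2 * sigma / d%:R] \in Aint.
  have -> : (vieta_lucas tau).[2 * sigma / d%:R] = 2 * chi y * chi x ^+ l.-1.
    by rewrite -(lucasE chi sigma chi_eigen) -[_ * chi x * _]mulrA -exprS prednK // chi_l mulr1.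
  by rewrite !rpredM ?rpredX ?rpred_nat ?chi_Aint.
apply: (horner_monic_Aint lucas_Aint lucas_monic); first by rewrite lucas_size.
exact: vieta_lucas_int.
Qed.

End RegularGraphWalk.

Section Circulant.
Variables (n : nat) (S : {set 'Z_n}).

Lemma circ_rel_sym : {mono -%R : s / s \in S} -> symmetric (circ_rel S).
Proof. by move=> S_oppr x y; rewrite /circ_rel -opprB S_oppr. Qed.

Lemma deg_circ_rel x : deg (circ_rel S) x = #|S|.
Proof.
rewrite /deg -(card_preimset S (addIr (- x))); apply: eq_card => y.
by rewrite !inE.
Qed.

Lemma circ_rel_eigen (chi : 'Z_n -> algC) :
  {morph chi : u v / u + v >-> u * v} ->
  adj_eigen (circ_rel S) chi (\sum_(s in S) chi s).
Proof.
move=> chi_morph x; rewrite (reindex_inj (addrI x)) /= mulr_suml.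
apply: eq_big => [s|s _]; first by rewrite /circ_rel addrC addKr.
by rewrite chi_morph mulrC.
Qed.

Lemma Zp_expr_morph (eta : algC) :
  (1 < n)%N -> eta ^+ n = 1 -> {morph (fun z : 'Z_n => eta ^+ z) : u v / u + v >-> u * v}.
Proof.
move=> n_gt1 eta_n u v /=.
have eta_N : eta ^+ (Zp_trunc n).+2 = 1 by rewrite Zp_cast.
by rewrite -exprD (expr_mod _ eta_N).
Qed.

Lemma Zp_nat_expr (eta : algC) k :
  (1 < n)%N -> eta ^+ n = 1 -> eta ^+ (k%:R : 'Z_n) = eta ^+ k.
Proof. by move=> n_gt1 eta_n; rewrite val_Zp_nat // (expr_mod _ eta_n). Qed.

Lemma Zp_exprN (eta : algC) (z : 'Z_n) :
  (1 < n)%N -> eta ^+ n = 1 -> eta ^+ (- z) = (eta ^+ z)^-1.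
Proof.
move=> n_gt1 eta_n; apply/esym/mulr1_eq.
by rewrite -(Zp_expr_morph n_gt1 eta_n z (- z)) subrr expr0.
Qed.

End Circulant.

Section FourElementSet.
Variables (T : finType) (x1 x2 x3 x4 : T).

Lemma mem_set4 : [set x1; x2; x3; x4] =i [:: x1; x2; x3; x4].
Proof. by move=> x; rewrite !inE -!orbA. Qed.

Lemma card_set4_uniq : #|[set x1; x2; x3; x4]| = 4 -> uniq [:: x1; x2; x3; x4].
Proof. by move=> card4; apply/card_uniqP; rewrite -(eq_card mem_set4). Qed.

Lemma sum_set4 (V : nmodType) (F : T -> V) : uniq [:: x1; x2; x3; x4] ->
  \sum_(s in [set x1; x2; x3; x4]) F s = F x1 + F x2 + F x3 + F x4.
Proof.
move=> x_uniq; rewrite (eq_bigl _ _ mem_set4) -big_uniq //.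
by rewrite !big_cons big_nil /= addr0 !addrA.
Qed.

End FourElementSet.

Theorem theorem9p17 (l a b : nat) :
  (2 <= l)%N -> odd l ->
  (1 <= a <= l.-1)%N -> (1 <= b <= l.-1)%N ->
  let S : {set 'Z_(l.*2)} := [set (a%:R : 'Z_(l.*2)); - a%:R; b%:R; - b%:R] in
  graph_connected (circ_rel S) ->
  regular (circ_rel S) 4 ->
  (a + b != l)%N ->
  ~ PST_vertex (circ_rel S).
Proof.
move=> l_ge2 l_odd a_range b_range S _ S_reg ab_ne_l pst.
have l_gt0 : (0 < l)%N by lia.
have n_gt1 : (1 < l.*2)%N by rewrite -muln2; lia.
have [eta eta_prim] := C_prim_root_exists l_gt0.
have eta_2l : eta ^+ l.*2 = 1 by rewrite -muln2 exprM (prim_expr_order eta_prim) expr1n.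
have root_l k : (eta ^+ k) ^+ l = 1 by rewrite exprAC (prim_expr_order eta_prim) expr1n.
have S_uniq : uniq [:: (a%:R : 'Z_(l.*2)); - a%:R; b%:R; - b%:R].
  by apply: card_set4_uniq; rewrite -(deg_circ_rel S 0) S_reg.
have S_sym : symmetric (circ_rel S).
  apply: circ_rel_sym => s; rewrite !inE !eqr_oppLR !opprK.
  by do 4!case: (s == _).
have chi_eigen := circ_rel_eigen S (Zp_expr_morph n_gt1 eta_2l).
have := PST_vertex_eigen_Aint S_sym S_reg isT pst l_gt0 (fun z => root_l z) chi_eigen.
rewrite sum_set4 //= !Zp_exprN // !Zp_nat_expr //.
set sigma := (X in 2 * X / _).
rewrite (_ : 2 * sigma / 4 = sigma / 2); last by field.
apply/negP/(half_sum_prim_root_notin_Aint l_odd eta_prim); try lia.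
by apply: contraTneq S_uniq => ->; rewrite /= !inE !eqxx !orbT.
Qed.
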